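(* Let $S$ be an investment strategy with parameter space $\mathbb W=\mathcal W_k^\ell$ satisfying condition $(\mathrm L_\varepsilon)$ for some $\varepsilon\in(0,1)$. For each $t\ge0$ let $\zeta_t=\mathcal R_t/\int_{\mathbb W}\mathcal R_t\,d\mu$ and let $\bar\zeta_t$ be any probability density with respect to $\mu$ on $\mathbb W$ satisfying $\int_{\mathbb W}|\zeta_t-\bar\zeta_t|\,d\mu\le\frac{\varepsilon^2}{4m(t+1)^4}$. Let $\bar{\mathcal U}(S)$ be the parameter-free strategy with $\bar{\mathcal U}_t(S)=\int_{\mathbb W}S_t(\mathbf w)\bar\zeta_t(\mathbf w)\,d\mu(\mathbf w)$. Then (1) $\mathcal R_n(\bar{\mathcal U}(S))\ge(1-\varepsilon)\mathcal R_n(\mathcal U(S))$ for all $n\ge0$; (2) if $\mathcal U(S)$ is a universalization of $S$, then so is $\bar{\mathcal U}(S)$.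
   Context: Let $m\ge2$ and let $\mathbf x_0,\mathbf x_1,\dots\in(0,\infty)^m$ be return vectors. $\mathcal W_k=\{\mathbf w\in[0,1]^k:\sum_i w_i=1\}$. An investment strategy $S$ with parameter space $\mathbb W=\mathcal W_k^\ell$ assigns to each $t\ge0$, $\mathbf w\in\mathbb W$ a description $S_t(\mathbf w)\in\mathcal W_m$, measurable in $\mathbf w$; $\mathcal R_n(\mathbf w)=\prod_{t=0}^{n-1}S_t(\mathbf w)\cdot\mathbf x_t$ ($\mathcal R_0\equiv1$), $\mathcal L_n(S(\mathbf w))=\frac1n\log\mathcal R_n(\mathbf w)$; for parameter-free $U$, $\mathcal R_n(U)=\prod_{t<n}U_t\cdot\mathbf x_t$, $\mathcal L_n(U)=\frac1n\log\mathcal R_n(U)$. $\mu$ is the uniform probability measure on $\mathbb W$, and $\mathcal U(S)$ has $\mathcal U_t(S)=\int_{\mathbb W}S_t\mathcal R_t\,d\mu/\int_{\mathbb W}\mathcal R_t\,d\mu$. $U$ is a universalization of $S$ if there is $\eta_n\to0$, independent of market data, with $\mathcal L_n(U)\ge\sup_{\mathbf w}\mathcal L_n(S(\mathbf w))-\eta_n$ for all $n$ and all market sequences. Condition $(\mathrm L_\varepsilon)$: $S_{ti}(\mathbf w)\ge\frac{\varepsilon}{2m(t+1)^2}$ for all $t\ge0$, $1\le i\le m$, $\mathbf w\in\mathbb W$. *)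

From HB Require Import structures.
From mathcomp Require Import all_boot all_order all_algebra.
From mathcomp Require Import all_classical all_reals all_analysis.
Set Warnings "-notation-overridden,-ambiguous-paths,-notation-incompatible-prefix".
Import Order.TTheory GRing.Theory Num.Theory.
Import numFieldNormedType.Exports.
Local Open Scope classical_set_scope.
Local Open Scope ring_scope.

Section Defs.
Variable R : realType.

Definition simplex (k : nat) : set (k.-tuple R) :=
  [set w | (forall i, 0 <= tnth w i <= 1) /\ \sum_(i < k) tnth w i = 1].

Definition fsimplex (m : nat) : set ('I_m -> R) :=
  [set v | (forall i, 0 <= v i <= 1) /\ \sum_(i < m) v i = 1].

Definition paramW (k l : nat) : set (l.-tuple (k.-tuple R)) :=
  [set w | forall j, simplex k (tnth w j)].

(* Iterated Lebesgue integral over R^n of a function of n real coordinates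
   (coordinates are passed as a sequence). *)
Fixpoint iint (n : nat) (f : seq R -> \bar R) : \bar R :=
  match n with
  | 0 => f [::]
  | n'.+1 => (\int[lebesgue_measure]_x iint n' (fun s => f (x :: s)))%E
  end.

Definition leb (n : nat) (A : set (seq R)) : \bar R :=
  iint n (fun s => (\1_A s)%:E).

(* Chart of W_k^l: coordinates (w_{j,0},...,w_{j,k-2})_{j<l} in R^(l*(k-1)),
   the last coordinate of each block being 1 - (sum of the others). *)
Definition chart (k l : nat) (s : seq R) : l.-tuple (k.-tuple R) :=
  [tuple [tuple (if (i < k.-1)%N then nth 0 s (j * k.-1 + i)
                 else 1 - \sum_(i' < k.-1) nth 0 s (j * k.-1 + i'))
         | i < k] | j < l].

(* The domain of the chart (a product of l standard corner simplices). *)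
Definition chartD (k l : nat) : set (seq R) :=
  [set s | (forall n, 0 <= nth 0 s n) /\
           (forall j, (j < l)%N -> \sum_(i < k.-1) nth 0 s (j * k.-1 + i) <= 1)].

(* mu is the uniform probability measure on W_k^l: the normalized
   (l*(k-1))-dimensional Lebesgue measure transported by the chart. *)
Definition uniform_param (k l : nat)
    (mu : probability (l.-tuple (k.-tuple R)) R) : Prop :=
  forall A : set (l.-tuple (k.-tuple R)), measurable A ->
    (mu A * leb (l * k.-1) (chartD k l) =
     leb (l * k.-1) (chartD k l `&` chart k l @^-1` A))%E.

Variables (m k l : nat).
Notation P := (l.-tuple (k.-tuple R)).
Notation market := (nat -> 'I_m -> R).

Definition pos_market (x : market) : Prop := forall t i, 0 < x t i.

Definition is_strategy (S : nat -> P -> 'I_m -> R) : Prop :=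
  (forall t w, paramW k l w -> fsimplex m (S t w)) /\
  (forall t i, measurable_fun (paramW k l) (fun w => S t w i)).

Definition condL (eps : R) (S : nat -> P -> 'I_m -> R) : Prop :=
  forall t i w, paramW k l w -> eps / (2 * m%:R * (t%:R + 1) ^+ 2) <= S t w i.

Definition dot (v y : 'I_m -> R) : R := \sum_(i < m) v i * y i.

Definition wealth (S : nat -> P -> 'I_m -> R) (x : market) (n : nat) (w : P) : R :=
  \prod_(t < n) dot (S t w) (x t).

Definition wealthU (U : nat -> 'I_m -> R) (x : market) (n : nat) : R :=
  \prod_(t < n) dot (U t) (x t).

Definition growth (r : R) (n : nat) : R := n%:R^-1 * ln r.

Definition univ (mu : probability P R) (S : nat -> P -> 'I_m -> R) (x : market)
    : nat -> 'I_m -> R :=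
  fun t i => Rintegral mu (paramW k l) (fun w => S t w i * wealth S x t w) /
             Rintegral mu (paramW k l) (fun w => wealth S x t w).

Definition zeta (mu : probability P R) (S : nat -> P -> 'I_m -> R) (x : market)
    (t : nat) (w : P) : R :=
  wealth S x t w / Rintegral mu (paramW k l) (fun w => wealth S x t w).

Definition univbar (mu : probability P R) (S : nat -> P -> 'I_m -> R)
    (zb : nat -> P -> R) : nat -> 'I_m -> R :=
  fun t i => Rintegral mu (paramW k l) (fun w => S t w i * zb t w).

Definition prob_density (mu : probability P R) (zb : P -> R) : Prop :=
  measurable_fun (paramW k l) zb /\
  (forall w, paramW k l w -> 0 <= zb w) /\
  (\int[mu]_(w in paramW k l) (zb w)%:E = 1)%E.

Definition universalization (S : nat -> P -> 'I_m -> R)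
    (U : market -> nat -> 'I_m -> R) : Prop :=
  exists eta : nat -> R, eta @ \oo --> 0 /\
    forall x, pos_market x -> forall n, (0 < n)%N ->
      growth (wealthU (U x) x n) n >=
      sup [set growth (wealth S x n w) n | w in paramW k l] - eta n.

End Defs.

Arguments simplex {R} k.
Arguments fsimplex {R} m.
Arguments paramW {R} k l.
Arguments iint {R} n f.
Arguments leb {R} n A.
Arguments chart {R} k l s.
Arguments chartD {R} k l.
Arguments uniform_param {R k l} mu.
Arguments pos_market {R m} x.
Arguments is_strategy {R m k l} S.
Arguments condL {R m k l} eps S.
Arguments dot {R m} v y.
Arguments wealth {R m k l} S x n w.
Arguments wealthU {R m} U x n.
Arguments growth {R} r n.
Arguments univ {R m k l} mu S x t i.
Arguments zeta {R m k l} mu S x t w.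
Arguments univbar {R m k l} mu S zb t i.
Arguments prob_density {R k l} mu zb.
Arguments universalization {R m k l} S U.

Set Warnings "-notation-overridden,-ambiguous-paths,-notation-incompatible-prefix".
From HB Require Import structures.
From mathcomp Require Import all_boot all_order all_algebra.
From mathcomp Require Import all_classical all_reals all_analysis.
From mathcomp Require Import ring lra.
Import Order.TTheory GRing.Theory Num.Theory.
Import numFieldNormedType.Exports.
Local Open Scope classical_set_scope.
Local Open Scope ring_scope.

(* At step t both portfolios average S_t over W, against zeta_t and its
   approximation zetabar_t respectively, so coordinatewise
   U_t - Ubar_t <= int |zeta_t - zetabar_t| <= c_t a_t, where
   c_t = eps / (2 m (t+1)^2) is the lower bound of (L_eps) and
   a_t = eps / (2 (t+1)^2).  Since U_t is itself an average of S_t, it is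
   >= c_t, whence Ubar_t >= (1 - a_t) U_t.  Multiplying over t < n,
   R_n(Ubar) >= prod (1 - a_t) R_n(U) >= (1 - sum a_t) R_n(U) >= (1 - eps) R_n(U)
   because sum 1/(t+1)^2 <= 2.  A constant factor shifts the growth rate by
   ln(1 - eps)/n -> 0, so universalization is preserved. *)

Lemma measurable_simplex (R : realType) (k : nat) : measurable (@simplex R k).
Proof.
have -> : simplex k =
    \bigcap_(i in [set: 'I_k]) ((fun w : k.-tuple R => tnth w i) @^-1` `[0, 1])
    `&` ((fun w : k.-tuple R => \sum_(i < k) tnth w i) @^-1` [set 1]).
  apply/seteqP; split => w /= [H1 H2]; split=> // i.
    by move=> _; rewrite /= in_itv /= H1.
  by have := H1 i I; rewrite /= in_itv.
apply: measurableI.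
  apply: fin_bigcap_measurable => [|i _]; first exact: finite_finset.
  by rewrite -[_ @^-1` _]setTI; apply: measurable_tnth.
rewrite -[_ @^-1` _]setTI; apply: measurable_sum => // i; exact: measurable_tnth.
Qed.

Lemma measurable_paramW (R : realType) (k l : nat) : measurable (@paramW R k l).
Proof.
have -> : paramW k l =
    \bigcap_(j in [set: 'I_l]) ((fun w : l.-tuple (k.-tuple R) => tnth w j) @^-1` simplex k).
  by apply/seteqP; split => w /= H j; [move=> _; exact: H | exact: H j I].
apply: fin_bigcap_measurable => [|j _]; first exact: finite_finset.
rewrite -[_ @^-1` _]setTI; apply: measurable_tnth => //; exact: measurable_simplex.
Qed.

Section FiniteMeasure.
Context {d} {T : measurableType d} {R : realType}.
Variable mu : {finite_measure set T -> \bar R}.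
Context {D : set T}.
Hypothesis mD : measurable D.

Lemma bounded_integrable {f : T -> R} (M : R) : measurable_fun D f ->
  (forall w, D w -> `|f w| <= M) -> mu.-integrable D (EFin \o f).
Proof.
move=> mf fM; apply: (le_integrable mD (g := EFin \o cst M)).
- exact/measurable_realfun.measurable_EFinP.
- by move=> w Dw /=; rewrite lee_fin (le_trans (fM w Dw)) ?ler_norm.
- exact: finite_measure_integrable_cst.
Qed.

Context {f : T -> R}.
Hypotheses (mf : measurable_fun D f) (f_ge0 : forall w, D w -> 0 <= f w).
Hypothesis f_int1 : (\int[mu]_(w in D) (f w)%:E = 1)%E.

Let int_norm1 : (\int[mu]_(w in D) `|(f w)%:E| = 1)%E.
Proof.
rewrite -f_int1; apply: eq_integral => w /set_mem Dw.
by rewrite gee0_abs ?lee_fin ?f_ge0.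
Qed.

Lemma density_integrable : mu.-integrable D (EFin \o f).
Proof.
apply/integrableP; split; first exact/measurable_realfun.measurable_EFinP.
by rewrite int_norm1 ltry.
Qed.

Lemma density_measure_gt0 : 0 < fine (mu D).
Proof.
apply: fine_gt0; rewrite lt0e measure_ge0 andbT -ge0_fin_numE ?measure_ge0 //.
rewrite fin_num_measure // andbT.
apply/negP => /eqP muD0.
have := integral_abs_eq0 mD ((measurable_realfun.measurable_EFinP _ _).2 mf) muD0.
by rewrite int_norm1 => /eqP; rewrite eqe oner_eq0.
Qed.

End FiniteMeasure.

Lemma prod1B_ge_1Bsum (R : realDomainType) (n : nat) (a : nat -> R) :
  (forall s, 0 <= a s <= 1) -> 1 - \sum_(s < n) a s <= \prod_(s < n) (1 - a s).
Proof.
move=> a01; elim: n => [|n IH]; first by rewrite !big_ord0 subr0.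
rewrite !big_ord_recr /=; have /andP[an0 an1] := a01 n.
set A := \sum_(i < n) _ in IH *; set P := \prod_(i < n) _ in IH *.
have : 0 <= (1 - a n) * (P - (1 - A)) by apply: mulr_ge0; rewrite subr_ge0.
have : 0 <= a n * A by rewrite mulr_ge0 // sumr_ge0 // => i _; case/andP: (a01 i).
lra.
Qed.

Lemma sum_inv_sqr_le (R : realFieldType) (n : nat) :
  \sum_(s < n) ((s%:R + 1) ^+ 2)^-1 <= 2 - 2 / (n%:R + 1) :> R.
Proof.
elim: n => [|n IH]; first by rewrite big_ord0 add0r divr1 subrr.
rewrite big_ord_recr /= -[n.+1%:R]natr1.
set N := n%:R + 1 in IH *; set A := \sum_(i < n) _ in IH *.
have N1 : 1 <= N by rewrite lerDr.
have N0 : 0 < N by apply: lt_le_trans N1.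
suff : (N ^+ 2)^-1 + 2 / (N + 1) <= 2 / N by lra.
rewrite -subr_ge0.
have -> : 2 / N - ((N ^+ 2)^-1 + 2 / (N + 1)) = (N - 1) / (N ^+ 2 * (N + 1)).
  by field; rewrite !gt_eqF // addr_gt0.
by rewrite divr_ge0 ?subr_ge0 // mulr_ge0 ?exprn_ge0 ?addr_ge0 // ltW.
Qed.

Lemma inv_sqr_weight_itv {R : realFieldType} {eps : R} (s : nat) :
  0 <= eps <= 2 -> 0 <= eps / (2 * (s%:R + 1) ^+ 2) <= 1.
Proof.
move=> /andP[eps0 eps2].
have s1 : 1 <= (s%:R + 1 : R) ^+ 2 by rewrite exprn_ege1 // lerDr.
rewrite divr_ge0 ?mulr_ge0 ?exprn_ge0 ?addr_ge0 //= ler_pdivrMr; last first.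
  by rewrite mulr_gt0 // (lt_le_trans _ s1).
by rewrite mul1r (le_trans eps2) // ler_peMr.
Qed.

Lemma prod_1B_half_inv_sqr_ge {R : realFieldType} {eps : R} (n : nat) :
  0 <= eps <= 2 -> 1 - eps <= \prod_(s < n) (1 - eps / (2 * (s%:R + 1) ^+ 2)).
Proof.
move=> eps02; have /andP[eps0 _] := eps02.
apply: (le_trans _ (@prod1B_ge_1Bsum _ n (fun s => eps / (2 * (s%:R + 1) ^+ 2))
  (fun s => inv_sqr_weight_itv s eps02))).
have -> : \sum_(s < n) eps / (2 * (s%:R + 1) ^+ 2)
    = eps / 2 * \sum_(s < n) ((s%:R + 1) ^+ 2)^-1.
  by rewrite mulr_sumr; apply: eq_bigr => s _; rewrite invfM mulrA.
have := ler_wpM2l (divr_ge0 eps0 (ler0n _ 2)) (sum_inv_sqr_le R n).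
have : 0 <= eps / 2 * (2 / (n%:R + 1)) by apply: mulr_ge0; apply: divr_ge0.
lra.
Qed.

Section Dot.
Context {R : realType} {m : nat}.
Implicit Types (u v y : 'I_m -> R).

Lemma dot_ge_coord {u y} (j0 : 'I_m) :
  (forall j, 0 <= u j) -> (forall j, 0 <= y j) -> u j0 * y j0 <= dot u y.
Proof.
by move=> u0 y0; rewrite /dot (bigD1 j0) //= lerDl sumr_ge0 // => j _; rewrite mulr_ge0.
Qed.

Lemma dot_le_sum {u y} : (forall j, u j <= 1) -> (forall j, 0 <= y j) ->
  dot u y <= \sum_(j < m) y j.
Proof. by move=> u1 y0; apply: ler_sum => j _; rewrite ler_piMl. Qed.

Lemma ler_dot_scale (c : R) {u v y} :
  (forall j, c * u j <= v j) -> (forall j, 0 <= y j) -> c * dot u y <= dot v y.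
Proof.
by move=> uv y0; rewrite mulr_sumr; apply: ler_sum => j _; rewrite mulrA ler_wpM2r.
Qed.

End Dot.

Section UniversalPortfolio.
Context {R : realType} {m k l : nat}.
Context {S : nat -> l.-tuple (k.-tuple R) -> 'I_m -> R}.
Context {eps : R} {mu : probability (l.-tuple (k.-tuple R)) R}.
Context {x : nat -> 'I_m -> R}.
Hypotheses (m_gt0 : (0 < m)%N) (HS : is_strategy S) (eps_gt0 : 0 < eps).
Hypotheses (HL : condL eps S) (Hx : pos_market x).
Hypothesis muW_gt0 : 0 < fine (mu (paramW k l)).

Local Notation W := (paramW k l).
Let mW : measurable W := measurable_paramW R k l.
Let j0 : 'I_m := Ordinal m_gt0.
Let x_ge0 s j : 0 <= x s j := ltW (Hx s j).

Let S_ge0 t w : W w -> forall i, 0 <= S t w i.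
Proof. by move=> Ww i; case/andP: ((HS.1 t w Ww).1 i). Qed.

Let S_le1 t w : W w -> forall i, S t w i <= 1.
Proof. by move=> Ww i; case/andP: ((HS.1 t w Ww).1 i). Qed.

Let mS t i : measurable_fun W (fun w => S t w i).
Proof. exact: HS.2. Qed.

Definition condL_bound (t : nat) : R := eps / (2 * m%:R * (t%:R + 1) ^+ 2).

Lemma condL_bound_gt0 t : 0 < condL_bound t.
Proof. by rewrite divr_gt0 // !mulr_gt0 ?exprn_gt0 ?ltr0n // ltr_wpDl. Qed.

Lemma wealth_ge t w :
  W w -> \prod_(s < t) (condL_bound s * x s j0) <= wealth S x t w.
Proof.
move=> Ww; apply: ler_prod => s _.
rewrite mulr_ge0 ?x_ge0 ?(ltW (condL_bound_gt0 s)) //=.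
apply: (le_trans _ (dot_ge_coord j0 (S_ge0 s w Ww) (x_ge0 s))).
by rewrite ler_wpM2r //; exact: HL.
Qed.

Lemma wealth_le t w : W w -> wealth S x t w <= \prod_(s < t) \sum_(j < m) x s j.
Proof.
move=> Ww; apply: ler_prod => s _.
rewrite dot_le_sum ?andbT ?sumr_ge0 // => [j _|]; last exact: S_le1.
by rewrite mulr_ge0 ?S_ge0.
Qed.

Lemma wealth_gt0 t w : W w -> 0 < wealth S x t w.
Proof.
move=> Ww; apply: (lt_le_trans _ (wealth_ge t w Ww)).
by apply: prodr_gt0 => s _; rewrite mulr_gt0 ?condL_bound_gt0.
Qed.

Lemma measurable_wealth t : measurable_fun W (wealth S x t).
Proof.
apply: measurable_prod => s _; apply: measurable_sum => j.
exact: measurable_realfun.measurable_funM (mS s j) (measurable_cst _).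
Qed.

Lemma integrable_wealth t : mu.-integrable W (EFin \o wealth S x t).
Proof.
apply: (bounded_integrable mu mW (\prod_(s < t) \sum_(j < m) x s j)) => [|w Ww].
  exact: measurable_wealth.
by rewrite ger0_norm ?wealth_le // ltW // wealth_gt0.
Qed.

Lemma Rintegral_wealth_gt0 t : 0 < Rintegral mu W (fun w => wealth S x t w).
Proof.
pose lo := \prod_(s < t) (condL_bound s * x s j0).
have lo_gt0 : 0 < lo by apply: prodr_gt0 => s _; rewrite mulr_gt0 ?condL_bound_gt0.
apply: (@lt_le_trans _ _ (Rintegral mu W (cst lo))).
  by rewrite Rintegral_cst // mulr_gt0.
apply: le_Rintegral => //; first exact: finite_measure_integrable_cst.
  exact: integrable_wealth.
by move=> w Ww; exact: wealth_ge.
Qed.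

Lemma integrable_S_mul t i {f : l.-tuple (k.-tuple R) -> R} :
  measurable_fun W f -> mu.-integrable W (EFin \o f) ->
  mu.-integrable W (EFin \o (fun w => S t w i * f w)).
Proof.
move=> mf fi; apply: (le_integrable mW _ _ fi).
  exact/measurable_realfun.measurable_EFinP/measurable_realfun.measurable_funM.
move=> w Ww /=; rewrite lee_fin normrM ger0_norm ?S_ge0 //.
by rewrite ler_piMl ?S_le1.
Qed.

Lemma measurable_zeta t : measurable_fun W (zeta mu S x t).
Proof.
exact: measurable_realfun.measurable_funM (measurable_wealth t) (measurable_cst _).
Qed.

Lemma integrable_zeta t : mu.-integrable W (EFin \o zeta mu S x t).
Proof. exact: (integrableZr mW _ (integrable_wealth t)). Qed.

Lemma univE t i :
  univ mu S x t i = Rintegral mu W (fun w => S t w i * zeta mu S x t w).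
Proof.
rewrite /univ -RintegralZr //.
  by apply: eq_Rintegral => w _; rewrite mulrA.
exact: (integrable_S_mul t i (measurable_wealth t) (integrable_wealth t)).
Qed.

Lemma univ_ge t i : condL_bound t <= univ mu S x t i.
Proof.
rewrite /univ ler_pdivlMr ?Rintegral_wealth_gt0 // -RintegralZl //; last first.
  exact: integrable_wealth.
apply: le_Rintegral => //.
- exact: (integrableZl mW _ (integrable_wealth t)).
- exact: (integrable_S_mul t i (measurable_wealth t) (integrable_wealth t)).
by move=> w Ww; rewrite ler_wpM2r ?(ltW (wealth_gt0 t w Ww)) //; exact: HL.
Qed.

Lemma univ_sub_univbar_le {zb : nat -> l.-tuple (k.-tuple R) -> R} t i :
  prob_density mu (zb t) ->
  univ mu S x t i - univbar mu S zb t i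
    <= Rintegral mu W (fun w => `|zeta mu S x t w - zb t w|).
Proof.
move=> [mz [z0 z1]]; have zi := density_integrable mu mz z0 z1.
have dzi : mu.-integrable W (EFin \o (fun w => zeta mu S x t w - zb t w)).
  exact: (integrableB mW (integrable_zeta t) zi).
have Szi := integrable_S_mul t i (measurable_zeta t) (integrable_zeta t).
have Szbi := integrable_S_mul t i mz zi.
rewrite univE /univbar -RintegralB //; apply: le_Rintegral => //.
- exact: (integrableB mW Szi Szbi).
- exact: (integrable_norm dzi).
move=> w Ww; rewrite -mulrBr (le_trans (ler_wpM2l (S_ge0 t w Ww i) (ler_norm _))) //.
by rewrite ler_piMl ?S_le1.
Qed.

Lemma univbar_ge {zb : nat -> l.-tuple (k.-tuple R) -> R} t (delta : R) :
  0 <= delta -> prob_density mu (zb t) ->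
  (\int[mu]_(w in W) (`|zeta mu S x t w - zb t w|)%:E
     <= (condL_bound t * delta)%:E)%E ->
  forall i, (1 - delta) * univ mu S x t i <= univbar mu S zb t i.
Proof.
move=> delta_ge0 zd dist_le i.
have dist_fin_le : Rintegral mu W (fun w => `|zeta mu S x t w - zb t w|)
    <= condL_bound t * delta.
  have : (0 <= \int[mu]_(w in W) (`|zeta mu S x t w - zb t w|)%:E)%E.
    by apply: integral_ge0 => w _; rewrite lee_fin.
  by move: dist_le; rewrite /Rintegral; case: (\int[mu]_(w in W) _)%E.
have := univ_sub_univbar_le t i zd.
have := ler_wpM2r delta_ge0 (univ_ge t i).
lra.
Qed.

Lemma univ_gt0 t i : 0 < univ mu S x t i.
Proof. exact: lt_le_trans (condL_bound_gt0 t) (univ_ge t i). Qed.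

Lemma dot_univ_gt0 t : 0 < dot (univ mu S x t) (x t).
Proof.
apply: (lt_le_trans _ (dot_ge_coord j0 (fun j => ltW (univ_gt0 t j)) (x_ge0 t))).
by rewrite mulr_gt0 ?univ_gt0.
Qed.

Lemma wealthU_univ_gt0 n : 0 < wealthU (univ mu S x) x n.
Proof. by apply: prodr_gt0 => s _; exact: dot_univ_gt0. Qed.

Lemma wealthU_univbar_ge {zb : nat -> l.-tuple (k.-tuple R) -> R} n : eps <= 2 ->
  (forall t, prob_density mu (zb t) /\
     (\int[mu]_(w in W) (`|zeta mu S x t w - zb t w|)%:E
        <= (eps ^+ 2 / (4 * m%:R * (t%:R + 1) ^+ 4))%:E)%E) ->
  (1 - eps) * wealthU (univ mu S x) x n <= wealthU (univbar mu S zb) x n.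
Proof.
move=> eps_le2 Hzb.
have eps02 : 0 <= eps <= 2 by rewrite ltW.
pose a s := eps / (2 * (s%:R + 1) ^+ 2).
have step s : (1 - a s) * dot (univ mu S x s) (x s) <= dot (univbar mu S zb s) (x s).
  apply: ler_dot_scale (x_ge0 s) => j.
  apply: univbar_ge (Hzb s).1 _ j; first by case/andP: (inv_sqr_weight_itv s eps02).
  suff -> : condL_bound s * a s = eps ^+ 2 / (4 * m%:R * (s%:R + 1) ^+ 4).
    exact: (Hzb s).2.
  by rewrite /condL_bound /a; field; rewrite !gt_eqF ?ltr0n // ltr_wpDl.
apply: (le_trans (ler_wpM2r (ltW (wealthU_univ_gt0 n))
                            (prod_1B_half_inv_sqr_ge n eps02))).
rewrite /wealthU -big_split /=; apply: ler_prod => s _.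
rewrite step andbT mulr_ge0 ?(ltW (dot_univ_gt0 s)) // subr_ge0.
by case/andP: (inv_sqr_weight_itv s eps02).
Qed.

End UniversalPortfolio.

Lemma universalization_mulr {R : realType} {m k l : nat}
    {S : nat -> l.-tuple (k.-tuple R) -> 'I_m -> R}
    {U V : (nat -> 'I_m -> R) -> nat -> 'I_m -> R} {c : R} : 0 < c ->
  (forall x, pos_market x -> forall n,
     0 < wealthU (U x) x n /\ c * wealthU (U x) x n <= wealthU (V x) x n) ->
  universalization S U -> universalization S V.
Proof.
move=> c_gt0 UV [eta [eta0 Ueta]].
exists (eta - (fun n : nat => ln c * n%:R^-1)); split.
  have lnc_harmonic : (fun n : nat => ln c * n%:R^-1) @ \oo --> 0.
    rewrite -cvg_shiftS /=.
    have := @cvgMl_tmp R nat _ _ harmonic (ln c) 0 cvg_harmonic.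
    by rewrite mulr0; apply.
  by have := cvgB eta0 lnc_harmonic; rewrite subr0; apply.
move=> x Hx n n_gt0; have [U_gt0 cUV] := UV x Hx n.
have lnV : ln c + ln (wealthU (U x) x n) <= ln (wealthU (V x) x n).
  have cU_gt0 : 0 < c * wealthU (U x) x n by rewrite mulr_gt0.
  by rewrite -lnM ?posrE // ler_ln ?posrE // (lt_le_trans cU_gt0).
have n_inv_ge0 : 0 <= n%:R^-1 :> R by rewrite invr_ge0.
have := ler_wpM2l n_inv_ge0 lnV; rewrite mulrDr [_ * ln c]mulrC.
have := Ueta x Hx n n_gt0.
rewrite /growth /= !fctE; lra.
Qed.

Theorem mainTheorem10 (R : realType) (m k l : nat)
  (hm : (2 <= m)%N) (hk : (0 < k)%N)
  (S : nat -> l.-tuple (k.-tuple R) -> 'I_m -> R)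
  (HS : is_strategy S)
  (eps : R) (heps : 0 < eps < 1) (HL : condL eps S)
  (mu : probability (l.-tuple (k.-tuple R)) R) (Hmu : uniform_param mu)
  (zb : (nat -> 'I_m -> R) -> nat -> l.-tuple (k.-tuple R) -> R)
  (Hzb : forall x : nat -> 'I_m -> R, pos_market x -> forall t : nat,
     prob_density mu (zb x t) /\
     (\int[mu]_(w in paramW k l) (`|zeta mu S x t w - zb x t w|)%:E
        <= (eps ^+ 2 / (4 * m%:R * (t%:R + 1) ^+ 4))%:E)%E) :
  (forall x : nat -> 'I_m -> R, pos_market x -> forall n : nat,
     wealthU (univbar mu S (zb x)) x n >= (1 - eps) * wealthU (univ mu S x) x n)
  /\
  (universalization S (univ mu S) ->
   universalization S (fun x => univbar mu S (zb x))).
Proof.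
have m_gt0 : (0 < m)%N := ltnW hm.
have /andP[eps_gt0 eps_lt1] := heps.
have eps_le2 : eps <= 2 by rewrite (le_trans (ltW eps_lt1)) ?ler1n.
have muW_gt0 (x : nat -> 'I_m -> R) : pos_market x -> 0 < fine (mu (paramW k l)).
  move=> Hx; have [mz [z_ge0 z_int1]] := (Hzb x Hx 0).1.
  exact (density_measure_gt0 mu (measurable_paramW R k l) mz z_ge0 z_int1).
have wealth_ratio (x : nat -> 'I_m -> R) (Hx : pos_market x) n :=
  wealthU_univbar_ge m_gt0 HS eps_gt0 HL Hx (muW_gt0 x Hx) n eps_le2 (Hzb x Hx).
split=> [x Hx n|]; first exact: wealth_ratio.
apply: (universalization_mulr (c := 1 - eps)); first by rewrite subr_gt0.
move=> x Hx n; split; last exact: wealth_ratio.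
exact: (wealthU_univ_gt0 m_gt0 HS eps_gt0 HL Hx (muW_gt0 x Hx)).
Qed.
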